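(* Let $\mathcal{A}$ be a deterministic, singly-initiated, event-driven distributed protocol that correctly identifies the bridges of every connected graph. Then for every connected graph $G=(V,E)$, the execution of $\mathcal{A}$ on $G$ sends at least $|E|$ messages and takes at least $\mathrm{Diam}(G)/2$ time.
   Context: Network model: a connected undirected graph $G=(V,E)$ whose nodes are processors and whose edges are two-way communication links; each node initially knows only its own identity and its incident links (not the rest of the graph). Singly-initiated means exactly one node begins computing spontaneously; event-driven means every other node performs no action (in particular sends no message) before it has received a message. An edge is a bridge if its deletion disconnects $G$. ''Correctly identifies the bridges'' means that at termination every edge has been correctly classified as a bridge or non-bridge. $\mathrm{Diam}(G)$ is the maximum distance between two vertices of $G$; time is measured in synchronous rounds. *)

(* A synchronous message-passing model (KT0: each node knows
   its identity and its incident links, as port numbers 0..deg-1). *)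
From mathcomp Require Import all_boot.
Set Implicit Arguments. Unset Strict Implicit. Unset Printing Implicit Defensive.

Section Graphs.
Variable V : finType.
Implicit Types (adj : rel V).

Definition connected_graph adj := forall x y : V, connect adj x y.

Definition del_edge adj (u v : V) : rel V :=
  fun x y => adj x y && ~~ (((x == u) && (y == v)) || ((x == v) && (y == u))).

Definition is_bridge adj (u v : V) : bool :=
  adj u v && ~~ [forall x, forall y, connect (del_edge adj u v) x y].

(* the edge set E as a set of 2-element vertex sets; |E| = nedges *)
Definition edge_set adj : {set {set V}} :=
  [set E : {set V} | [exists x, exists y, adj x y && (E == [set x; y])]].
Definition nedges adj : nat := #|edge_set adj|.

Definition walk_of_length adj (x y : V) (n : nat) : bool :=
  [exists p : n.-tuple V, path adj x p && (last x p == y)].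

Definition is_dist adj (x y : V) (d : nat) : Prop :=
  walk_of_length adj x y d /\ forall n, n < d -> ~~ walk_of_length adj x y n.

Definition is_diam adj (D : nat) : Prop :=
  (exists x y, is_dist adj x y D) /\
  forall x y d, is_dist adj x y d -> d <= D.
End Graphs.

(* A network: graph, node identities, local port numbering (nbr v lists the
   neighbours of v; port i of v is the link to nth v (nbr v) i), and the
   unique initiator. *)
Record network (V : finType) := Network {
  adj : rel V;
  ident : V -> nat;
  nbr : V -> seq V;
  initiator : V
}.

Definition valid_network (V : finType) (N : network V) : Prop :=
  symmetric (adj N) /\ irreflexive (adj N) /\ connected_graph (adj N) /\
  injective (ident N) /\
  (forall v, uniq (nbr N v) /\ forall w, (w \in nbr N v) = adj N v w).

(* A deterministic protocol: a node's local state is initialised from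
   (is-initiator flag, own identity, own degree); in every round a node that
   is awake and not halted maps (state, messages received on each port) to
   (new state, message to send on each port).  Halted states are final;
   poutput s i says whether the link at port i is classified as a bridge. *)
Record protocol := Protocol {
  pstate : Type;
  pmsg : Type;
  pinit : bool -> nat -> nat -> pstate;
  pstep : pstate -> (nat -> option pmsg) -> pstate * (nat -> option pmsg);
  phalted : pstate -> bool;
  poutput : pstate -> nat -> bool
}.

Section Exec.
Variables (A : protocol) (V : finType) (N : network V).

Definition deg (v : V) : nat := size (nbr N v).

Definition msgs := V -> nat -> option (pmsg A).

Definition inbox (sent : msgs) (v : V) : nat -> option (pmsg A) :=
  fun i => if i < deg v then
             let w := nth v (nbr N v) i in sent w (index v (nbr N w))
           else None.

Definition restrict (v : V) (m : nat -> option (pmsg A)) : nat -> option (pmsg A) :=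
  fun i => if i < deg v then m i else None.

(* One synchronous round at node v.  [None] = asleep (has not yet acted).
   Event-driven: an asleep node does nothing until it receives a message;
   it then wakes up (non-initiator initial state) and processes it. *)
Definition node_round (v : V) (prev : option (pstate A))
    (inb : nat -> option (pmsg A)) : option (pstate A) * (nat -> option (pmsg A)) :=
  match prev with
  | Some s =>
      if phalted s then (Some s, fun _ => None)
      else let sm := pstep s inb in (Some sm.1, restrict v sm.2)
  | None =>
      if has (fun i => isSome (inb i)) (iota 0 (deg v)) then
        let sm := pstep (pinit A false (ident N v) (deg v)) inb in
        (Some sm.1, restrict v sm.2)
      else (None, fun _ => None)
  end.

(* singly initiated: only the initiator is awake before round 0 *)
Definition prev0 (v : V) : option (pstate A) :=
  if v == initiator N then Some (pinit A true (ident N v) (deg v)) else None.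

(* exec r = (states after round r, messages sent during round r) *)
Fixpoint exec (r : nat) : (V -> option (pstate A)) * msgs :=
  match r with
  | 0 => (fun v => (node_round v (prev0 v) (fun _ => None)).1,
          fun v => (node_round v (prev0 v) (fun _ => None)).2)
  | r'.+1 => let c := exec r' in
          (fun v => (node_round v (c.1 v) (inbox c.2 v)).1,
           fun v => (node_round v (c.1 v) (inbox c.2 v)).2)
  end.

(* number of messages sent during rounds 0..T *)
Definition msg_count (T : nat) : nat :=
  \sum_(r < T.+1) \sum_(v : V)
     count (fun i => isSome ((exec r).2 v i)) (iota 0 (deg v)).

Definition terminated (T : nat) : Prop :=
  forall v, exists s, (exec T).1 v = Some s /\ phalted s.

Definition outputs_correct (T : nat) : Prop :=
  forall v s, (exec T).1 v = Some s ->
    forall i, i < deg v -> poutput s i = is_bridge (adj N) v (nth v (nbr N v) i).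
End Exec.

(* A correctly identifies the bridges of every connected graph (for every
   identity assignment, port numbering and choice of initiator). *)
Definition identifies_bridges (A : protocol) : Prop :=
  forall (V : finType) (N : network V), valid_network N ->
    exists T, terminated A N T /\ outputs_correct A N T.

From mathcomp Require Import all_boot.
From Stdlib Require Import FunctionalExtensionality.
Set Implicit Arguments. Unset Strict Implicit. Unset Printing Implicit Defensive.

(* Waking up spreads at most one link per round and a terminated execution has
   woken every node, so every node is within distance T of the initiator and
   Diam(G) <= 2T.

   For the message bound, suppose some edge uv carries no message in either
   direction.  If uv is a bridge, the side of uv away from the initiator is
   never woken, contradicting termination.  Otherwise take two copies of the
   network and rewire uv to cross between them.  The result is a valid
   connected network; the copy holding the initiator cannot detect the
   rewiring, since nothing is ever sent over uv, so it replays the original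
   execution, and the other copy never receives a message.  Hence the
   protocol does not terminate there.  So every edge carries a message by round T. *)

Section Walks.
Variables (V : finType) (e : rel V).

Lemma walk_of_lengthP x y n :
  reflect (exists2 p : seq V, size p = n & path e x p && (last x p == y))
          (walk_of_length e x y n).
Proof.
apply: (iffP existsP) => [[p Hp] | [p Hsize Hp]]; first by exists p; rewrite ?size_tuple.
by rewrite -Hsize; exists (in_tuple p).
Qed.

Lemma walk_of_length0 x : walk_of_length e x x 0.
Proof. by apply/walk_of_lengthP; exists [::]; rewrite /= ?eqxx. Qed.

Lemma walk_of_length1 x y : e x y -> walk_of_length e x y 1.
Proof. by move=> Hxy; apply/walk_of_lengthP; exists [:: y]; rewrite /= ?Hxy ?eqxx. Qed.

Lemma walk_of_length_cat x y z m n :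
  walk_of_length e x y m -> walk_of_length e y z n -> walk_of_length e x z (m + n).
Proof.
move=> /walk_of_lengthP [p <- /andP [Hp /eqP Hpy]] /walk_of_lengthP [q <- Hq].
by apply/walk_of_lengthP; exists (p ++ q); rewrite ?size_cat // cat_path last_cat Hp Hpy.
Qed.

Lemma walk_of_length_sym x y n :
  symmetric e -> walk_of_length e x y n -> walk_of_length e y x n.
Proof.
move=> Hsym /walk_of_lengthP [p <- /andP [Hp /eqP <-]].
apply/walk_of_lengthP; exists (rev (belast x p)); first by rewrite size_rev size_belast.
have Hrev : (fun z => e^~ z) =2 e by move=> ? ?; apply: Hsym.
rewrite rev_path (eq_path Hrev) Hp /=.
by rewrite -(last_cons x) -rev_rcons -lastI rev_cons last_rcons.
Qed.

Lemma dist_le_walk x y d n : is_dist e x y d -> walk_of_length e x y n -> d <= n.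
Proof. by case=> _ Hmin Hn; rewrite leqNgt; apply/negP => /Hmin; rewrite Hn. Qed.

End Walks.

Section Execution.
Variables (A : protocol) (V : finType) (N : network V).

Definition awake (r : nat) (v : V) : bool := isSome ((exec A N r).1 v).

Definition sent_on (r : nat) (x y : V) : bool :=
  isSome ((exec A N r).2 x (index y (nbr N x))).

Lemma node_round_sent_awake v p (inb : nat -> option (pmsg A)) i :
  isSome ((node_round N v p inb).2 i) -> isSome (node_round N v p inb).1.
Proof. by rewrite /node_round; case: p => [s|] /=; [case: phalted | case: has]. Qed.

Lemma node_round_wakes v (inb : nat -> option (pmsg A)) :
  isSome (node_round N v None inb).1 -> exists i, isSome (inb i).
Proof. by rewrite /node_round; case: hasP => [[i _ Hi] _ | //]; exists i. Qed.

Lemma node_round_halted v s (inb : nat -> option (pmsg A)) :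
  phalted s -> node_round N v (Some s) inb = (Some s, fun _ => None).
Proof. by rewrite /node_round => ->. Qed.

Lemma awake_of_sent r v i : isSome ((exec A N r).2 v i) -> awake r v.
Proof. by case: r => [|r]; apply: node_round_sent_awake. Qed.

Lemma asleep_no_msg r v i : ~~ awake r v -> (exec A N r).2 v i = None.
Proof.
move=> /negP Hv; case E: ((exec A N r).2 v i) => //; case: Hv.
by apply: (awake_of_sent (i := i)); rewrite E.
Qed.

Lemma not_sent_on_no_msg r x y :
  ~~ sent_on r x y -> (exec A N r).2 x (index y (nbr N x)) = None.
Proof. by rewrite /sent_on; case: ((exec A N r).2 x _). Qed.

Lemma inbox_sent r x i : isSome (inbox N (exec A N r).2 x i) ->
  i < deg N x /\ sent_on r (nth x (nbr N x) i) x.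
Proof. by rewrite /inbox; case: ifP. Qed.

Lemma woken_by_inbox r x : ~~ awake r x -> awake r.+1 x ->
  exists2 i, i < deg N x & sent_on r (nth x (nbr N x) i) x.
Proof.
rewrite /awake /= => /negbTE; case: ((exec A N r).1 x) => // _.
by case/node_round_wakes => i /inbox_sent [Hi Hs]; exists i.
Qed.

Lemma exec_halted T k : terminated A N T ->
  forall v, (exec A N (T + k)).1 v = (exec A N T).1 v.
Proof.
move=> Ht; elim: k => [|k IH] v; first by rewrite addn0.
have [s [Hs Hh]] := Ht v.
by rewrite addnS /= IH Hs node_round_halted.
Qed.

Lemma silent_after_termination T r v i : terminated A N T -> T < r ->
  (exec A N r).2 v i = None.
Proof.
move=> Ht /subnKC <-; have [s [Hs Hh]] := Ht v.
by rewrite addSn /= exec_halted // Hs node_round_halted.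
Qed.

End Execution.

Section Diameter.
Variables (A : protocol) (V : finType) (N : network V).
Hypothesis HN : valid_network N.

Lemma adj_nth_nbr x i : i < deg N x -> adj N x (nth x (nbr N x) i).
Proof.
have [_ [_ [_ [_ Hnbr]]]] := HN; have [_ <-] := Hnbr x.
exact: mem_nth.
Qed.

Lemma awake_walk r x : awake A N r x ->
  exists2 n, n <= r & walk_of_length (adj N) (initiator N) x n.
Proof.
have [Hsym _] := HN.
elim: r x => [|r IH] x Hx.
  exists 0 => //; move: Hx; rewrite /awake /= /prev0.
  case: eqP => [-> _|_ /node_round_wakes [//]]; exact: walk_of_length0.
have [Hr | Hr] := boolP (awake A N r x).
  by have [n Hn Hw] := IH x Hr; exists n => //; apply: leqW.
have [i Hi Hs] := woken_by_inbox Hr Hx.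
have [n Hn Hw] := IH _ (awake_of_sent Hs).
exists n.+1 => //; rewrite -addn1; apply: walk_of_length_cat Hw _.
by apply: walk_of_length1; rewrite Hsym adj_nth_nbr.
Qed.

Lemma diam_le_double_time T : terminated A N T ->
  forall D, is_diam (adj N) D -> D <= 2 * T.
Proof.
move=> Ht D [[x [y Hxy]] _].
have Hawake z : awake A N T z by have [s [Hs _]] := Ht z; rewrite /awake Hs.
have [m Hm Hx] := awake_walk (Hawake x).
have [n Hn Hy] := awake_walk (Hawake y).
have Hwalk : walk_of_length (adj N) x y (m + n).
  by apply: walk_of_length_cat (walk_of_length_sym _ Hx) Hy; case: HN.
by rewrite (leq_trans (dist_le_walk Hxy Hwalk)) // mul2n -addnn leq_add.
Qed.

End Diameter.

Definition same_link (V : eqType) (u v x w : V) : bool :=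
  ((x == u) && (w == v)) || ((x == v) && (w == u)).

Lemma same_linkC (V : eqType) (u v x w : V) : same_link u v x w = same_link u v w x.
Proof. by rewrite /same_link orbC [(w == u) && _]andbC [(w == v) && _]andbC. Qed.

Lemma del_edgeE (V : finType) (e : rel V) u v x w :
  del_edge e u v x w = e x w && ~~ same_link u v x w.
Proof. by []. Qed.

Lemma del_edge_sym (V : finType) (e : rel V) u v :
  symmetric e -> symmetric (del_edge e u v).
Proof. by move=> Hsym x w; rewrite !del_edgeE Hsym same_linkC. Qed.

Section SilentLink.
Variables (A : protocol) (V : finType) (N : network V).
Hypothesis HN : valid_network N.
Variables u v : V.

Definition silent_link (r : nat) : bool := ~~ sent_on A N r u v && ~~ sent_on A N r v u.

Lemma silent_link_not_sent r x w :
  silent_link r -> same_link u v x w -> ~~ sent_on A N r w x.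
Proof. by case/andP=> Huv Hvu /orP [] /andP [/eqP -> /eqP ->]. Qed.

Lemma asleep_off_component T : (forall r, r <= T -> silent_link r) ->
  forall r x, r <= T -> ~~ connect (del_edge (adj N) u v) (initiator N) x ->
  ~~ awake A N r x.
Proof.
move=> Hsilent; elim=> [|r IH] x Hr Hx.
  rewrite /awake /= /prev0; case: eqP => [Ex | _].
    by rewrite Ex connect0 in Hx.
  by apply/negP => /node_round_wakes [].
apply/negP => Hawake.
have [i Hi Hs] := woken_by_inbox (IH x (ltnW Hr) Hx) Hawake.
set w := nth x (nbr N x) i in Hs.
have Hlink : ~~ same_link u v x w.
  by apply: contraL Hs; apply: silent_link_not_sent; apply: Hsilent; apply: ltnW.
apply: (negP (IH w (ltnW Hr) _)) (awake_of_sent Hs).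
apply: contra Hx => Hw; apply: connect_trans Hw (connect1 _).
have [Hsym _] := HN.
by rewrite del_edge_sym // del_edgeE adj_nth_nbr.
Qed.

Lemma silent_link_not_bridge T : terminated A N T ->
  (forall r, r <= T -> silent_link r) -> ~~ is_bridge (adj N) u v.
Proof.
move=> Ht Hsilent; rewrite /is_bridge negb_and negbK; apply/orP; right.
have Hsym : symmetric (del_edge (adj N) u v) by apply: del_edge_sym; case: HN.
have Hreach x : connect (del_edge (adj N) u v) (initiator N) x.
  apply/negPn/negP => /(asleep_off_component Hsilent (leqnn T)).
  by have [s [Hs _]] := Ht x; rewrite /awake Hs.
apply/forallP => x; apply/forallP => y.
by apply: connect_trans (Hreach y); rewrite (sym_connect_sym Hsym).
Qed.

End SilentLink.

Section Cover.
Variables (V : finType) (N : network V) (u v : V).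

Definition cover_adj : rel (V * bool) :=
  fun a b => adj N a.1 b.1 && (b.2 == a.2 (+) same_link u v a.1 b.1).
(* The second copy's identities are shifted past all of N's, so that the first
   copy keeps exactly the identities of N. *)
Definition cover_ident (a : V * bool) : nat :=
  if a.2 then ident N a.1 + (\max_z ident N z).+1 else ident N a.1.
Definition cover_nbr (a : V * bool) : seq (V * bool) :=
  [seq (w, a.2 (+) same_link u v a.1 w) | w <- nbr N a.1].
Definition cover : network (V * bool)%type :=
  Network cover_adj cover_ident cover_nbr (initiator N, false).

Lemma cover_nbr_inj x b : injective (fun w : V => (w, b (+) same_link u v x w)).
Proof. by move=> w w' [->]. Qed.

Lemma cover_deg a : deg cover a = deg N a.1.
Proof. exact: size_map. Qed.

Lemma cover_nth a i : i < deg N a.1 ->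
  nth a (nbr cover a) i =
    (nth a.1 (nbr N a.1) i, a.2 (+) same_link u v a.1 (nth a.1 (nbr N a.1) i)).
Proof. by move=> Hi; rewrite /= /cover_nbr (nth_map a.1). Qed.

Lemma cover_index x w b :
  index (x, b) (nbr cover (w, b (+) same_link u v x w)) = index x (nbr N w).
Proof.
rewrite /= /cover_nbr /=.
have {1}-> : b = b (+) same_link u v x w (+) same_link u v w x.
  by rewrite same_linkC -addbA addbb addbF.
by rewrite index_map //; apply: cover_nbr_inj.
Qed.

Lemma cover_ident_inj : injective (ident N) -> injective cover_ident.
Proof.
have Hlt x : ident N x < (\max_z ident N z).+1 by rewrite ltnS leq_bigmax.
move=> Hinj [x [|]] [y [|]]; rewrite /cover_ident /=.
- by move/addIn/Hinj ->.
- by move=> E; have := Hlt y; rewrite -E ltnNge leq_addl.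
- by move=> E; have := Hlt x; rewrite E ltnNge leq_addl.
- by move/Hinj ->.
Qed.

Hypothesis HN : valid_network N.
Hypothesis Huv : adj N u v.
Hypothesis Hconn : forall x y, connect (del_edge (adj N) u v) x y.

Lemma cover_connect_layer b x y : connect cover_adj (x, b) (y, b).
Proof.
have /connectP [p Hp ->] := Hconn x y.
elim: p x Hp => [|z p IHp] x /=; first by rewrite connect0.
case/andP=> Hxz Hp; apply: connect_trans (IHp _ Hp); apply: connect1.
by move: Hxz; rewrite del_edgeE /cover_adj /= => /andP [-> /negbTE ->]; rewrite addbF eqxx.
Qed.

Lemma valid_cover : valid_network cover.
Proof.
have [Hsym [Hirr [_ [Hinj Hnbr]]]] := HN.
split; [|split; [|split; [|split]]].
- move=> [x b] [y c]; rewrite /= /cover_adj /= Hsym same_linkC.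
  by case: b; case: c; case: (same_link u v y x).
- by move=> [x b]; rewrite /= /cover_adj /= Hirr.
- move=> [x b] [y c]; case: (eqVneq b c) => [<-|Hbc]; first exact: cover_connect_layer.
  apply: connect_trans (cover_connect_layer b x u) _.
  apply: connect_trans (cover_connect_layer c v y).
  apply: connect1; rewrite /cover_adj /= Huv /same_link !eqxx /=.
  by move: Hbc; case: b; case: c.
- exact: cover_ident_inj.
move=> [x b]; have [Huniq Hmem] := Hnbr x; split.
  by rewrite map_inj_uniq //; apply: cover_nbr_inj.
move=> [w c]; rewrite /= /cover_nbr /cover_adj /=.
have [->|Hc] := eqVneq c (b (+) same_link u v x w).
  by rewrite (mem_map (@cover_nbr_inj x b)) Hmem andbT.
by rewrite andbF; apply/mapP => -[z _ [E1 E2]]; move: Hc; rewrite E2 E1 eqxx.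
Qed.

End Cover.

Section CoverExecution.
Variables (A : protocol) (V : finType) (N : network V) (u v : V).
Hypothesis Hsilent : forall r, silent_link A N u v r.

Let N2 := cover N u v.

Lemma cover_node_round_false x (p : option (pstate A)) inb :
  node_round N2 (x, false) p inb = node_round N x p inb.
Proof. by rewrite /node_round /restrict !cover_deg. Qed.

Lemma cover_inbox_false r x :
  (forall w, (exec A N2 r).2 (w, false) = (exec A N r).2 w) ->
  (forall w, ~~ awake A N2 r (w, true)) ->
  inbox N2 (exec A N2 r).2 (x, false) = inbox N (exec A N r).2 x.
Proof.
move=> Hfalse Htrue; apply: functional_extensionality => i.
rewrite /inbox cover_deg /=; case: ifP => // Hi.
rewrite (@cover_nth _ N u v (x, false) i Hi) /=; set w := nth x (nbr N x) i.
have := cover_index N u v x w false; rewrite /= => ->.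
case Hlink: (same_link u v x w) => /=; last by rewrite Hfalse.
by rewrite (asleep_no_msg _ (Htrue w)) (not_sent_on_no_msg (silent_link_not_sent _ Hlink)).
Qed.

Lemma cover_woken_false r x :
  (forall w, (exec A N2 r).2 (w, false) = (exec A N r).2 w) ->
  (forall w, ~~ awake A N2 r (w, true)) ->
  ~~ awake A N2 r.+1 (x, true).
Proof.
move=> Hfalse Htrue; apply/negP => Hx.
have [i Hi] := woken_by_inbox (Htrue x) Hx; rewrite cover_deg in Hi.
rewrite (@cover_nth _ N u v (x, true) i Hi) /=; set w := nth x (nbr N x) i.
rewrite /sent_on (cover_index N u v x w true).
case Hlink: (same_link u v x w) => /= Hs.
  by move: (silent_link_not_sent (Hsilent r) Hlink); rewrite /sent_on -Hfalse Hs.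
by move: (Htrue w); rewrite (awake_of_sent Hs).
Qed.

Lemma cover_simulation r :
  (forall x, (exec A N2 r).1 (x, false) = (exec A N r).1 x /\
             (exec A N2 r).2 (x, false) = (exec A N r).2 x) /\
  (forall x, ~~ awake A N2 r (x, true)).
Proof.
elim: r => [|r [IHfalse IHtrue]].
  split=> x; rewrite /awake /= /prev0 /= xpair_eqE ?andbT ?andbF.
    by rewrite cover_deg cover_node_round_false.
  by apply/negP => /node_round_wakes [].
have Hfalse w : (exec A N2 r).2 (w, false) = (exec A N r).2 w by case: (IHfalse w).
split=> x; last exact: cover_woken_false.
by rewrite /= (cover_inbox_false _ Hfalse IHtrue) (proj1 (IHfalse x)) cover_node_round_false.
Qed.

End CoverExecution.

Lemma silent_link_nonterminating (A : protocol) (V : finType) (N : network V) u v :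
  identifies_bridges A -> valid_network N -> adj N u v ->
  (forall x y, connect (del_edge (adj N) u v) x y) ->
  ~ (forall r, silent_link A N u v r).
Proof.
move=> Hid HN Huv Hconn Hsilent.
have [T [Ht _]] := Hid _ _ (valid_cover HN Huv Hconn).
have [s [Hs _]] := Ht (initiator N, true).
by move: ((cover_simulation Hsilent T).2 (initiator N)); rewrite /awake Hs.
Qed.

Section MessageCount.
Variables (A : protocol) (V : finType) (N : network V).
Hypothesis HN : valid_network N.

Lemma link_used T x y : identifies_bridges A -> terminated A N T -> adj N x y ->
  exists r : 'I_T.+1, sent_on A N r x y || sent_on A N r y x.
Proof.
move=> Hid Ht Hxy; apply/existsP; apply: contraT; rewrite negb_exists => /forallP Hnone.
have Hsilent r : r <= T -> silent_link A N x y r.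
  by move=> Hr; have := Hnone (Ordinal (Hr : r < T.+1)); rewrite negb_or.
have Hconn a b : connect (del_edge (adj N) x y) a b.
  move: (silent_link_not_bridge HN Ht Hsilent).
  by rewrite /is_bridge Hxy negbK => /forallP /(_ a) /forallP /(_ b).
case: (silent_link_nonterminating Hid HN Hxy Hconn).
move=> r; have [|HTr] := leqP r T; first exact: Hsilent.
by rewrite /silent_link /sent_on !(silent_after_termination _ _ Ht HTr).
Qed.

Lemma count_sent_ports r x :
  count (fun i => isSome ((exec A N r).2 x i)) (iota 0 (deg N x)) =
  \sum_(w : V) (adj N x w && sent_on A N r x w).
Proof.
have [_ [_ [_ [_ Hnbr]]]] := HN; have [Huniq Hmem] := Hnbr x.
have -> : iota 0 (deg N x) = [seq index w (nbr N x) | w <- nbr N x].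
  apply: (@eq_from_nth _ 0); first by rewrite size_iota size_map.
  by move=> i; rewrite size_iota => Hi; rewrite nth_iota // (nth_map x) // index_uniq.
rewrite count_map -sum1_count big_mkcond big_uniq // big_mkcond.
by apply: eq_bigr => w _; rewrite Hmem; case: (adj N x w).
Qed.

Lemma nedges_le_msg_count T : identifies_bridges A -> terminated A N T ->
  nedges (adj N) <= msg_count A N T.
Proof.
move=> Hid Ht; have [Hsym _] := HN.
set S := [set t : 'I_T.+1 * V * V | adj N t.1.2 t.2 && sent_on A N t.1.1 t.1.2 t.2].
have HS : #|S| = msg_count A N T.
  rewrite /msg_count; under eq_bigr do under eq_bigr do rewrite count_sent_ports.
  rewrite pair_bigA pair_bigA -sum1_card big_mkcond.
  by apply: eq_bigr => t _; rewrite inE.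
rewrite -HS /nedges; apply: leq_trans (leq_imset_card (fun t => [set t.1.2; t.2]) S).
apply: subset_leq_card; apply/subsetP => E.
rewrite inE => /existsP [x /existsP [y /andP [Hxy /eqP ->]]].
have [r /orP [Hs | Hs]] := link_used Hid Ht Hxy.
  by apply/imsetP; exists (r, x, y); first rewrite inE Hxy Hs.
by apply/imsetP; exists (r, y, x); [rewrite inE Hsym Hxy Hs | rewrite setUC].
Qed.

End MessageCount.

Theorem mainTheorem2 (A : protocol) :
  identifies_bridges A ->
  forall (V : finType) (N : network V), valid_network N ->
  forall T : nat, terminated A N T ->
    nedges (adj N) <= msg_count A N T /\
    (forall D : nat, is_diam (adj N) D -> D <= 2 * T).
Proof.
move=> Hid V N HN T Ht; split; first exact: nedges_le_msg_count.
exact: diam_le_double_time.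
Qed.
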